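(* Let $\mathcal{L}:\mathbb{R}^d\to\mathbb{R}$ be differentiable on $\mathbb{R}^d\setminus\{\mathbf{0}\}$ and radially invariant. Consider two runs $S$ and $\tilde S$ of the generic optimization scheme $$\mathbf{x}_{k+1}=\mathbf{x}_k-\eta_k\,\mathbf{a}_k\oslash\mathbf{b}_k,\qquad \mathbf{a}_k=\beta\mathbf{a}_{k-1}+\nabla\mathcal{L}(\mathbf{x}_k)+\lambda\mathbf{x}_k$$ (the second with its own $\tilde\eta_k,\tilde\beta,\tilde\lambda,\tilde{\mathbf{b}}_k$, iterates $\tilde{\mathbf{x}}_k$, etc.), with nonzero iterates and $\mathbf{b}_k,\tilde{\mathbf{b}}_k$ having nonzero entries, and for each run define $r_k=\|\mathbf{x}_k\|$, $\mathbf{u}_k=\mathbf{x}_k/r_k$, $\mathbf{c}_k=r_k\mathbf{a}_k\oslash\frac{\mathbf{b}_k}{d^{-1/2}\|\mathbf{b}_k\|}$, $A_k=\frac{\eta_k}{r_k^2 d^{-1/2}\|\mathbf{b}_k\|}$, $\eta^e_k=A_k(1-A_k\langle\mathbf{c}_k,\mathbf{u}_k\rangle)^{-1}$, $\mathbf{c}_k^\perp=\mathbf{c}_k-\langle\mathbf{c}_k,\mathbf{u}_k\rangle\mathbf{u}_k$ (and analogously with tildes). Assume $1-A_k\langle\mathbf{c}_k,\mathbf{u}_k\rangle>0$ and $1-\tilde A_k\langle\tilde{\mathbf{c}}_k,\tilde{\mathbf{u}}_k\rangle>0$ for all $k$. If $\mathbf{u}_0=\tilde{\mathbf{u}}_0$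 and for all $k\ge0$, $\eta^e_k=\tilde\eta^e_k$ and $\mathbf{c}^\perp_k=\tilde{\mathbf{c}}^\perp_k$, then $\mathbf{u}_k=\tilde{\mathbf{u}}_k$ for all $k\ge0$.
   Context: $\oslash$ denotes element-wise division; $\|\cdot\|$ and $\langle\cdot,\cdot\rangle$ are Euclidean. Radially invariant means $\mathcal{L}(\rho\mathbf{x})=\mathcal{L}(\mathbf{x})$ for all $\rho>0$. *)

From HB Require Import structures.
From mathcomp Require Import all_boot all_order all_algebra.
From mathcomp Require Import all_classical all_reals all_analysis.
Set Implicit Arguments. Unset Strict Implicit. Unset Printing Implicit Defensive.
Import Order.TTheory GRing.Theory Num.Theory.
Import numFieldNormedType.Exports.
Local Open Scope ring_scope.

Section Defs.
Context {R : realType} {d : nat}.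
Implicit Types (v w : 'rV[R]_d).

Definition dotp v w : R := \sum_(i < d) v 0 i * w 0 i.
Definition enorm v : R := Num.sqrt (dotp v v).
Definition ediv v w : 'rV[R]_d := \row_i (v 0 i / w 0 i).

Definition ebasis (i : 'I_d) : 'rV[R]_d := \row_j (if j == i then 1 else 0).
Definition grad (L : 'rV[R]_d -> R) (x : 'rV[R]_d) : 'rV[R]_d :=
  \row_i ('D_(ebasis i) L x).

Definition radially_invariant (L : 'rV[R]_d -> R) : Prop :=
  forall (x : 'rV[R]_d) (rho : R), 0 < rho -> L (rho *: x) = L x.

(* a run of x_{k+1} = x_k - eta_k a_k ⊘ b_k,
   a_k = beta a_{k-1} + grad L(x_k) + lambda x_k, with a_{-1} = am1 *)
Definition is_run (L : 'rV[R]_d -> R) (eta : nat -> R) (beta lam : R)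
  (am1 : 'rV[R]_d) (x a b : nat -> 'rV[R]_d) : Prop :=
  [/\ forall k, x k.+1 = x k - eta k *: ediv (a k) (b k),
      a 0%N = beta *: am1 + grad L (x 0%N) + lam *: x 0%N
    & forall k, a k.+1 = beta *: a k + grad L (x k.+1) + lam *: x k.+1].

Definition bscale (b : nat -> 'rV[R]_d) k : R := (Num.sqrt (d%:R))^-1 * enorm (b k).
Definition rr (x : nat -> 'rV[R]_d) k : R := enorm (x k).
Definition uu (x : nat -> 'rV[R]_d) k : 'rV[R]_d := (rr x k)^-1 *: x k.
Definition cc (x a b : nat -> 'rV[R]_d) k : 'rV[R]_d :=
  rr x k *: ediv (a k) (\row_i (b k 0 i / bscale b k)).
Definition AA (eta : nat -> R) (x b : nat -> 'rV[R]_d) k : R :=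
  eta k / (rr x k ^+ 2 * bscale b k).
Definition denom eta (x a b : nat -> 'rV[R]_d) k : R :=
  1 - AA eta x b k * dotp (cc x a b k) (uu x k).
Definition eta_eff eta (x a b : nat -> 'rV[R]_d) k : R :=
  AA eta x b k * (denom eta x a b k)^-1.
Definition cperp (x a b : nat -> 'rV[R]_d) k : 'rV[R]_d :=
  cc x a b k - dotp (cc x a b k) (uu x k) *: uu x k.

End Defs.

From HB Require Import structures.
From mathcomp Require Import all_boot all_order all_algebra.
From mathcomp Require Import all_classical all_reals all_analysis.
From mathcomp Require Import ring.
Import Order.TTheory GRing.Theory Num.Theory.
Import numFieldNormedType.Exports.
Local Open Scope ring_scope.

(* Writing x_k = r_k u_k and a_k ⊘ b_k = c_k / (r_k d^{-1/2} ||b_k||), one step of the scheme reads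
     x_{k+1} = r_k (u_k - A_k c_k) = r_k (1 - A_k <c_k,u_k>) (u_k - η^e_k c^⊥_k),
   and the scalar in front is positive, so u_{k+1} is the normalisation of u_k - η^e_k c^⊥_k.
   Hence the directions are driven by (η^e_k, c^⊥_k) alone and agree by induction. *)

Lemma scale_sub_perp (K : fieldType) (V : lmodType K) (A t : K) (u c : V) :
  1 - A * t != 0 ->
  u - A *: c = (1 - A * t) *: (u - (A / (1 - A * t)) *: (c - t *: u)).
Proof.
move=> D0; rewrite scalerBr scalerA mulrCA divff // mulr1.
by rewrite scalerBr scalerA scalerBl scale1r opprB addrA addrNK.
Qed.

Section Normalization.
Context {R : realType} {d : nat}.
Implicit Types (v w : 'rV[R]_d).

Definition normalize v : 'rV[R]_d := (enorm v)^-1 *: v.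

Lemma dotp_self_ge0 v : 0 <= dotp v v.
Proof. by rewrite /dotp sumr_ge0 // => i _; rewrite -expr2 sqr_ge0. Qed.

Lemma enorm_eq0 v : (enorm v == 0) = (v == 0).
Proof.
rewrite /enorm sqrtr_eq0 le_eqVlt ltNge dotp_self_ge0 orbF.
apply/idP/eqP => [/eqP v0 | ->]; last by rewrite /dotp big1 // => i _; rewrite mxE mulr0.
have sq_ge0 (i : 'I_d) : true -> 0 <= v 0 i * v 0 i by rewrite -expr2 sqr_ge0.
apply/rowP => i; rewrite mxE; apply/eqP.
by have /eqP := psumr_eq0P sq_ge0 v0 (i := i) isT; rewrite mulf_eq0 orbb.
Qed.

Lemma enorm_gt0 v : v != 0 -> 0 < enorm v.
Proof. by move=> v0; rewrite lt_def enorm_eq0 v0 sqrtr_ge0. Qed.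

Lemma enormZ l v : enorm (l *: v) = `|l| * enorm v.
Proof.
rewrite /enorm /dotp.
have -> : \sum_(i < d) (l *: v) 0 i * (l *: v) 0 i = l ^+ 2 * \sum_(i < d) v 0 i * v 0 i.
  by rewrite mulr_sumr; apply: eq_bigr => i _; rewrite !mxE; ring.
by rewrite sqrtrM ?sqr_ge0 // sqrtr_sqr.
Qed.

Lemma normalizeZ l v : 0 < l -> normalize (l *: v) = normalize v.
Proof.
move=> l_gt0; rewrite /normalize enormZ gtr0_norm // invfM scalerA.
by rewrite mulrAC mulVf ?mul1r // gt_eqF.
Qed.

Lemma scale_normalize v : v != 0 -> enorm v *: normalize v = v.
Proof. by move=> v0; rewrite scalerA divff ?scale1r // enorm_eq0. Qed.

End Normalization.

Section OneStep.
Context {R : realType} {d : nat}.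
Context {L : 'rV[R]_d -> R} {eta : nat -> R} {beta lam : R} {am1 : 'rV[R]_d}.
Context {x a b : nat -> 'rV[R]_d}.

Lemma cc_ediv k : cc x a b k = (rr x k * bscale b k) *: ediv (a k) (b k).
Proof. by apply/rowP => i; rewrite !mxE invfM invrK; ring. Qed.

Lemma bscale_neq0 k (i0 : 'I_d) : b k 0 i0 != 0 -> bscale b k != 0.
Proof.
move=> bki0; have bk0 : b k != 0 by apply: contraNneq bki0 => ->; rewrite mxE.
rewrite mulf_neq0 ?invr_eq0 ?enorm_eq0 // sqrtr_eq0 -ltNge ltr0n.
exact: leq_ltn_trans (leq0n i0) (ltn_ord i0).
Qed.

Hypothesis run : is_run L eta beta lam am1 x a b.

Lemma run_succ_polar k : x k != 0 -> bscale b k != 0 ->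
  x k.+1 = rr x k *: (uu x k - AA eta x b k *: cc x a b k).
Proof.
move=> xk0 bk0; have [-> _ _] := run.
have rk0 : rr x k != 0 by rewrite /rr enorm_eq0.
rewrite cc_ediv scalerBr scale_normalize // !scalerA /AA; congr (_ - _ *: _).
by field; rewrite rk0 bk0.
Qed.

Lemma uu_succ k : x k != 0 -> bscale b k != 0 -> 0 < denom eta x a b k ->
  uu x k.+1 = normalize (uu x k - eta_eff eta x a b k *: cperp x a b k).
Proof.
move=> xk0 bk0 D_gt0; rewrite /uu /rr -/(normalize _) run_succ_polar //.
rewrite (@scale_sub_perp _ _ _ (dotp (cc x a b k) (uu x k))) ?gt_eqF //.
by rewrite scalerA normalizeZ // mulr_gt0 // enorm_gt0.
Qed.

End OneStep.

Theorem lemma3 (R : realType) (d : nat) (L : 'rV[R]_d -> R)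
  (eta eta' : nat -> R) (beta beta' lam lam' : R) (am1 am1' : 'rV[R]_d)
  (x a b x' a' b' : nat -> 'rV[R]_d) :
  (forall y : 'rV[R]_d, y != 0 -> differentiable L y) ->
  radially_invariant L ->
  is_run L eta beta lam am1 x a b ->
  is_run L eta' beta' lam' am1' x' a' b' ->
  (forall k, x k != 0) -> (forall k, x' k != 0) ->
  (forall k (i : 'I_d), b k 0 i != 0) -> (forall k (i : 'I_d), b' k 0 i != 0) ->
  (forall k, 0 < denom eta x a b k) -> (forall k, 0 < denom eta' x' a' b' k) ->
  uu x 0%N = uu x' 0%N ->
  (forall k, eta_eff eta x a b k = eta_eff eta' x' a' b' k) ->
  (forall k, cperp x a b k = cperp x' a' b' k) ->
  forall k, uu x k = uu x' k.
Proof.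
move=> _ _ run run' x0 x0' b0 b0' D_gt0 D_gt0' u0 eta_eq cperp_eq k.
have [d0 | d_gt0] := posnP d.
  by subst d; apply/rowP => -[].
pose i0 := Ordinal d_gt0.
elim: k => [//|k IHk].
rewrite (uu_succ run k (x0 k) (bscale_neq0 k i0 (b0 k i0)) (D_gt0 k)).
rewrite (uu_succ run' k (x0' k) (bscale_neq0 k i0 (b0' k i0)) (D_gt0' k)).
by rewrite IHk eta_eq cperp_eq.
Qed.
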